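(* Let $G$ be a finite group whose order is divisible by at least three distinct primes. If $x,y\in\Sigma(G)$, then $d(x,y)\leq 2$, where $d$ is the distance in $\Gamma(G)$.
   Context: For a finite group $G$, let $\widetilde{\Gamma}(G)$ be the graph with vertex set $G$ in which two distinct elements $x,y$ are adjacent if and only if $|\langle x,y\rangle|$ is divisible by at least three distinct primes; $\Gamma(G)$ is the subgraph obtained by deleting the isolated vertices, and $d(x,y)$ denotes the distance between vertices $x,y$ of $\Gamma(G)$. $\Sigma(G)$ denotes the set of elements $g\in G$ whose order is divisible by at least two distinct primes. *)

From mathcomp Require Import all_boot all_fingroup.
Set Implicit Arguments. Unset Strict Implicit. Unset Printing Implicit Defensive.
Local Open Scope group_scope.

Definition gadj (gT : finGroupType) (G : {group gT}) (x y : gT) : Prop :=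
  [/\ x \in G, y \in G, x != y & 3 <= size (primes #|<<[set x; y]>>|)].

(* Vertices of \Gamma(G): non-isolated vertices of \tilde\Gamma(G). *)
Definition gvertex (gT : finGroupType) (G : {group gT}) (x : gT) : Prop :=
  exists z, gadj G x z.

Definition Sigma (gT : finGroupType) (G : {group gT}) : {set gT} :=
  [set g in G | 2 <= size (primes #[g])].

Definition dist_le2 (gT : finGroupType) (G : {group gT}) (x y : gT) : Prop :=
  gvertex G x /\ gvertex G y /\
  (x = y \/ gadj G x y \/ exists z, gadj G x z /\ gadj G z y).

(** A vertex x of Σ(G) whose order has at least three prime divisors is
    adjacent to every other element. Otherwise #[x] misses some prime r of
    #|G|, and an element z of order r (Cauchy) is adjacent to x, since
    <x, z> contains elements of orders #[x] and r. For y ∈ Σ(G), either r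
    divides #[y], and then x ~ y directly, or r does not, and x ~ z ~ y. *)

From mathcomp Require Import all_boot all_fingroup cyclic pgroup.
Set Implicit Arguments. Unset Strict Implicit. Unset Printing Implicit Defensive.
Local Open Scope group_scope.

Lemma primes_order_sub (gT : finGroupType) (H : {group gT}) (x : gT) :
  x \in H -> {subset primes #[x] <= primes #|H|}.
Proof. by move=> xH; apply: pi_of_dvd (order_dvdG xH) (cardG_gt0 H). Qed.

Lemma exists_prime_notin (m n : nat) :
  size (primes n) < size (primes m) -> exists2 r, r \in primes m & r \notin primes n.
Proof.
move=> lt_nm.
have [/hasP[r r_m r_n] | /hasPn sub_mn] := boolP (has [predC primes n] (primes m)).
  by exists r.
have := uniq_leq_size (primes_uniq m) (fun p p_m => negbNE (sub_mn p p_m)).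
by rewrite leqNgt lt_nm.
Qed.

Section Adjacency.

Variables (gT : finGroupType) (G : {group gT}).

Lemma gadj_sym (x y : gT) : gadj G x y -> gadj G y x.
Proof. by case=> xG yG nxy h; split=> //; [rewrite eq_sym | rewrite setUC]. Qed.

Lemma gadj_primes (x y : gT) (s : seq nat) :
  x \in G -> y \in G -> x != y -> 3 <= size s -> uniq s ->
  {subset s <= [predU primes #[x] & primes #[y]]} -> gadj G x y.
Proof.
move=> xG yG nxy s3 uniq_s sub_s; split=> //.
apply: leq_trans s3 (uniq_leq_size uniq_s _) => p /sub_s /orP[] p_ord.
  by apply: primes_order_sub p_ord; rewrite mem_gen ?set21.
by apply: primes_order_sub p_ord; rewrite mem_gen ?set22.
Qed.

Lemma gadj_order_primes3 (x y : gT) :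
  x \in G -> y \in G -> x != y -> 3 <= size (primes #[x]) -> gadj G x y.
Proof.
move=> xG yG nxy x3.
by apply: gadj_primes x3 (primes_uniq _) _ => // p p_x; rewrite inE p_x.
Qed.

Lemma gadj_Sigma_new_prime (x y : gT) (r : nat) :
  x \in Sigma G -> y \in G -> x != y ->
  r \in primes #[y] -> r \notin primes #[x] -> gadj G x y.
Proof.
rewrite inE => /andP[xG x2] yG nxy r_y r_x.
apply: (gadj_primes (s := r :: primes #[x])) => //=; first by rewrite r_x primes_uniq.
by move=> p; rewrite !inE => /predU1P[-> | ->]; rewrite ?r_y ?orbT.
Qed.

Lemma Sigma_neq_prime_order (x z : gT) :
  x \in Sigma G -> prime #[z] -> x != z.
Proof.
rewrite inE => /andP[_ x2] pr_z; apply: contraTneq x2 => ->.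
by rewrite primes_prime.
Qed.

Lemma gadj_Sigma_prime_order (x z : gT) :
  x \in Sigma G -> z \in G -> prime #[z] -> #[z] \notin primes #[x] -> gadj G x z.
Proof.
move=> xS zG pr_z z_x; apply: gadj_Sigma_new_prime z_x => //.
  exact: Sigma_neq_prime_order.
by rewrite primes_prime ?mem_head.
Qed.

Lemma Sigma_missing_prime_order (x : gT) :
  3 <= size (primes #|G|) -> x \in G -> size (primes #[x]) < 3 ->
  exists2 z, z \in G & prime #[z] && (#[z] \notin primes #[x]).
Proof.
move=> G3 xG x3; have [r r_G r_x] := exists_prime_notin (leq_trans x3 G3).
move: r_G; rewrite mem_primes => /and3P[pr_r _ r_dvd_G].
have [z zG oz] := Cauchy pr_r r_dvd_G.
by exists z; rewrite // oz pr_r.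
Qed.

Lemma Sigma_gvertex (x : gT) :
  3 <= size (primes #|G|) -> x \in Sigma G -> gvertex G x.
Proof.
move=> G3 xS; have /setIdP[xG _] := xS.
have [x3 | x3] := leqP 3 (size (primes #[x])).
  exists 1; apply: gadj_order_primes3 => //.
  by apply: contraTneq x3 => ->; rewrite order1.
have [z zG /andP[pr_z z_x]] := Sigma_missing_prime_order G3 xG x3.
by exists z; apply: gadj_Sigma_prime_order.
Qed.

End Adjacency.

Theorem lemma2p6 (gT : finGroupType) (G : {group gT}) :
  3 <= size (primes #|G|) ->
  forall x y : gT, x \in Sigma G -> y \in Sigma G -> dist_le2 G x y.
Proof.
move=> G3 x y xS yS; do 2 (split; first exact: Sigma_gvertex).
have [-> | nxy] := eqVneq x y; [by left | right].
have /setIdP[xG _] := xS; have /setIdP[yG _] := yS.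
have [x3 | x3] := leqP 3 (size (primes #[x])).
  by left; apply: gadj_order_primes3.
have [z zG /andP[pr_z z_x]] := Sigma_missing_prime_order G3 xG x3.
have [z_y | z_y] := boolP (#[z] \in primes #[y]).
  by left; apply: gadj_Sigma_new_prime z_y z_x.
right; exists z; split; first exact: gadj_Sigma_prime_order.
exact/gadj_sym/gadj_Sigma_prime_order.
Qed.
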